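(* For every $t\in[0,T]$ and every symmetric positive semidefinite $n\times n$ matrix $S$, one has $\tilde Q(S)\ge 0$ (at time $t$), where $\tilde Q$ is defined in the context.
   Context: Fix $T>0$, integers $n,l_1,l_2,d\ge1$, and deterministic coefficients on $[0,T]$: $C^1,\dots,C^d$ with values in $\mathbb R^{n\times n}$, $D^{1j}$ in $\mathbb R^{n\times l_1}$, $D^{2j}$ in $\mathbb R^{n\times l_2}$ ($j=1,\dots,d$), $Q$ with values in nonnegative definite symmetric $n\times n$ matrices, and $R^1,R^2$ with values in positive definite symmetric $l_1\times l_1$, $l_2\times l_2$ matrices. Block notation (time argument suppressed): $C:=\begin{pmatrix}C^1\\ \vdots\\ C^d\end{pmatrix}\in\mathbb R^{nd\times n}$, $D^i:=\begin{pmatrix}D^{i1}\\ \vdots\\ D^{id}\end{pmatrix}\in\mathbb R^{nd\times l_i}$, and for an $n\times n$ matrix $S$, $\hat S:=\mathrm{diag}(S,\dots,S)$ ($d$ copies), so that e.g. $C'\hat SC=\sum_j (C^j)'SC^j$ and $(D^1)'\hat SD^2=\sum_j(D^{1j})'SD^{2j}$. Define $\Lambda_i(S):=R^i+(D^i)'\hat SD^i$ ($i=1,2$), $\hat\Lambda(S):=\Lambda_1(S)-(D^1)'\hat SD^2\Lambda_2(S)^{-1}(D^2)'\hat SD^1$, $U(S):=\hat S-\hat SD^2\Lambda_2(S)^{-1}(D^2)'\hat S$ (an $nd\times nd$ matrix), $\tilde Q(S):=Q+C'U(S)C-C'U(S)D^1\hat\Lambda(S)^{-1}(D^1)'U(S)C$.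 *)

From mathcomp Require Import all_boot all_order all_algebra.
From mathcomp Require Import reals.
Set Implicit Arguments. Unset Strict Implicit. Unset Printing Implicit Defensive.
Import Order.TTheory GRing.Theory Num.Theory.
Local Open Scope ring_scope.

Section Defs.
Variable R : realType.

Definition psdmx (m : nat) (A : 'M[R]_m) : Prop :=
  A^T = A /\ forall x : 'cV[R]_m, 0 <= (x^T *m A *m x) 0 0.

Definition pdmx (m : nat) (A : 'M[R]_m) : Prop :=
  A^T = A /\ forall x : 'cV[R]_m, x != 0 -> 0 < (x^T *m A *m x) 0 0.

Variables (n d : nat).

Notation nd := (\sum_(j < d) n)%N.

Definition hatmx (S : 'M[R]_n) : 'M[R]_nd := \mxdiag_(j < d) S.

Definition stackmx (k : nat) (X : 'I_d -> 'M[R]_(n, k)) : 'M[R]_(nd, k) :=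
  \mxcol_(j < d) X j.

Definition Lambda (l : nat) (Ri : 'M[R]_l) (Di : 'M[R]_(nd, l)) (S : 'M[R]_n)
  : 'M[R]_l := Ri + Di^T *m hatmx S *m Di.

Definition Lambdahat (l1 l2 : nat) (R1 : 'M[R]_l1) (R2 : 'M[R]_l2)
  (D1 : 'M[R]_(nd, l1)) (D2 : 'M[R]_(nd, l2)) (S : 'M[R]_n) : 'M[R]_l1 :=
  Lambda R1 D1 S
  - D1^T *m hatmx S *m D2 *m invmx (Lambda R2 D2 S) *m D2^T *m hatmx S *m D1.

Definition Umx (l2 : nat) (R2 : 'M[R]_l2) (D2 : 'M[R]_(nd, l2)) (S : 'M[R]_n)
  : 'M[R]_nd :=
  hatmx S - hatmx S *m D2 *m invmx (Lambda R2 D2 S) *m D2^T *m hatmx S.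

Definition Qtilde (l1 l2 : nat) (Q : 'M[R]_n) (C : 'M[R]_(nd, n))
  (R1 : 'M[R]_l1) (R2 : 'M[R]_l2)
  (D1 : 'M[R]_(nd, l1)) (D2 : 'M[R]_(nd, l2)) (S : 'M[R]_n) : 'M[R]_n :=
  let U := Umx R2 D2 S in
  Q + C^T *m U *m C
  - C^T *m U *m D1 *m invmx (Lambdahat R1 R2 D1 D2 S) *m D1^T *m U *m C.

End Defs.

From mathcomp Require Import all_boot all_order all_algebra.
From mathcomp Require Import reals.
Import Order.TTheory GRing.Theory Num.Theory.
Local Open Scope ring_scope.

(* Both U(S) and Qtilde(S) are built from Schur complements
   H - H D (Rm + D' H D)^-1 D' H with H nonnegative and Rm positive definite.
   Completing the square shows that the quadratic form of such a complement at
   z is v' Rm v + (z + D v)' H (z + D v) for a suitable v, hence nonnegative.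
   Now U(S) is the Schur complement of diag(S,...,S) >= 0 with respect to
   (R2, D2), Lambdahat(S) = R1 + D1' U(S) D1, and Qtilde(S) - Q is the
   congruence by C of the Schur complement of U(S) with respect to (R1, D1). *)

Section PsdSchur.
Set Implicit Arguments.
Context {R : realType}.
Implicit Types (m k l : nat).

Definition schurmx m l (H : 'M[R]_m) (Rm : 'M[R]_l) (D : 'M[R]_(m, l)) :=
  H - H *m D *m invmx (Rm + D^T *m H *m D) *m D^T *m H.

Lemma trmx11 (A : 'M[R]_1) : A^T = A.
Proof. by rewrite [A]mx11_scalar tr_scalar_mx. Qed.

Lemma qformD m (A B : 'M[R]_m) (x : 'cV[R]_m) :
  (x^T *m (A + B) *m x) 0 0 = (x^T *m A *m x) 0 0 + (x^T *m B *m x) 0 0.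
Proof. by rewrite mulmxDr mulmxDl mxE. Qed.

Lemma psdmxD m (A B : 'M[R]_m) : psdmx A -> psdmx B -> psdmx (A + B).
Proof.
move=> [AT A_ge0] [BT B_ge0]; split; first by rewrite raddfD /= AT BT.
by move=> x; rewrite qformD addr_ge0.
Qed.

Lemma psdmx_congruence m k (C : 'M[R]_(k, m)) (A : 'M[R]_k) :
  psdmx A -> psdmx (C^T *m A *m C).
Proof.
move=> [AT A_ge0]; split; first by rewrite !trmx_mul trmxK AT mulmxA.
by move=> x; have := A_ge0 (C *m x); rewrite trmx_mul !mulmxA.
Qed.

Lemma pdmx_psdmx m (A : 'M[R]_m) : pdmx A -> psdmx A.
Proof.
move=> [AT A_gt0]; split => // x; have [->|x_neq0] := eqVneq x 0.
  by rewrite mulmx0 mxE.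
exact/ltW/A_gt0.
Qed.

Lemma pdmxDr m (A B : 'M[R]_m) : pdmx A -> psdmx B -> pdmx (A + B).
Proof.
move=> [AT A_gt0] [BT B_ge0]; split; first by rewrite raddfD /= AT BT.
by move=> x x_neq0; rewrite qformD ltr_pwDl ?A_gt0.
Qed.

Lemma pdmx_unit m (A : 'M[R]_m) : pdmx A -> A \in unitmx.
Proof.
move=> [_ A_gt0]; rewrite -row_free_unit; apply: inj_row_free => v vA0.
apply/eqP; apply: contraT => v_neq0.
have := A_gt0 v^T; rewrite trmx_eq0 v_neq0 trmxK vA0 mul0mx mxE ltxx.
by move/(_ isT).
Qed.

Lemma mulmx_schurmx m k l (H : 'M[R]_m) (Rm : 'M[R]_l) (D : 'M[R]_(m, l))
    (C : 'M[R]_(m, k)) :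
  C^T *m schurmx H Rm D *m C =
  C^T *m H *m C
  - C^T *m H *m D *m invmx (Rm + D^T *m H *m D) *m D^T *m H *m C.
Proof. by rewrite mulmxBr mulmxBl !mulmxA. Qed.

Section CompleteSquare.
Variables (m l : nat) (H : 'M[R]_m) (Rm : 'M[R]_l) (D : 'M[R]_(m, l)).
Hypotheses (HT : H^T = H) (RmT : Rm^T = Rm).
Let L := Rm + D^T *m H *m D.
Hypothesis L_unit : L \in unitmx.

(* v is the minimiser of v |-> v' Rm v + (z + D v)' H (z + D v). *)
Lemma schurmx_complete_square (z : 'cV[R]_m) :
  let v := - (invmx L *m (D^T *m H *m z)) in
  v^T *m Rm *m v + (z + D *m v)^T *m H *m (z + D *m v) =
  z^T *m schurmx H Rm D *m z.
Proof.
move=> v; set b := D^T *m H *m z.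
have LT : L^T = L by rewrite raddfD /= !trmx_mul trmxK HT RmT mulmxA.
have bT : b^T = z^T *m H *m D by rewrite !trmx_mul trmxK HT mulmxA.
have vT : v^T = - (b^T *m invmx L) by rewrite raddfN /= trmx_mul trmx_inv LT.
have vLv : v^T *m L *m v = b^T *m invmx L *m b.
  by rewrite vT /v !mulNmx mulmxN opprK -[_ *m L]mulmxA mulVmx // mulmx1 mulmxA.
have crossl : z^T *m H *m D *m v = v^T *m b.
  by rewrite -[LHS]trmx11 !trmx_mul trmxK HT !mulmxA.
have crossr : v^T *m D^T *m H *m z = v^T *m b by rewrite !mulmxA.
have expand : v^T *m Rm *m v + (z + D *m v)^T *m H *m (z + D *m v) =
    z^T *m H *m z + v^T *m L *m v + (v^T *m b + v^T *m b).
  rewrite [(z + _)^T]raddfD /= trmx_mul /L !mulmxDl !mulmxDr !mulmxA.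
  by rewrite crossl crossr mulmxDl (AC (1*(2*2)) ((2*(1*5))*(3*4))).
rewrite expand vLv vT mulNmx addrA addrK.
by rewrite /schurmx mulmxBr mulmxBl bT /b !mulmxA.
Qed.

End CompleteSquare.

Lemma psdmx_schurmx m l (H : 'M[R]_m) (Rm : 'M[R]_l) (D : 'M[R]_(m, l)) :
  psdmx H -> pdmx Rm -> psdmx (schurmx H Rm D).
Proof.
move=> H_psd Rm_pd; have [HT H_ge0] := H_psd; have [RmT _] := Rm_pd.
have L_pd : pdmx (Rm + D^T *m H *m D) by apply/pdmxDr/psdmx_congruence.
have L_unit := pdmx_unit L_pd; have [LT _] := L_pd.
split.
  by rewrite raddfB /= !trmx_mul trmx_inv LT trmxK HT !mulmxA.
move=> z; rewrite -(schurmx_complete_square D HT RmT L_unit) mxE.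
by apply: addr_ge0; [case: (pdmx_psdmx Rm_pd) => _; apply | apply: H_ge0].
Qed.

Lemma psdmx_hatmx n d (S : 'M[R]_n) : psdmx S -> psdmx (hatmx d S).
Proof.
move=> [ST S_ge0]; split; first by rewrite tr_mxdiag; apply: eq_mxdiag.
move=> z; rewrite -(submxcolK z) tr_mxcol mul_mxrow_mxdiag mul_mxrow_mxcol.
by rewrite summxE sumr_ge0.
Qed.

End PsdSchur.

Section QtildeSchur.
Variables (R : realType) (n d l1 l2 : nat).
Variables (R1 : 'M[R]_l1) (R2 : 'M[R]_l2) (S : 'M[R]_n).
Variables (D1 : 'M[R]_(\sum_(j < d) n, l1)) (D2 : 'M[R]_(\sum_(j < d) n, l2)).

Lemma Lambdahat_schurmx :
  Lambdahat R1 R2 D1 D2 S = R1 + D1^T *m Umx R2 D2 S *m D1.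
Proof. by rewrite (mulmx_schurmx (hatmx d S)) addrA. Qed.

Lemma Qtilde_schurmx (Q : 'M[R]_n) (C : 'M[R]_(\sum_(j < d) n, n)) :
  Qtilde Q C R1 R2 D1 D2 S = Q + C^T *m schurmx (Umx R2 D2 S) R1 D1 *m C.
Proof. by rewrite /Qtilde Lambdahat_schurmx -addrA mulmx_schurmx. Qed.

End QtildeSchur.

Theorem lemma3p1 (R : realType) (T : R) (n l1 l2 d : nat)
  (C : R -> 'I_d -> 'M[R]_n)
  (D1 : R -> 'I_d -> 'M[R]_(n, l1)) (D2 : R -> 'I_d -> 'M[R]_(n, l2))
  (Q : R -> 'M[R]_n) (R1 : R -> 'M[R]_l1) (R2 : R -> 'M[R]_l2) :
  0 < T -> (0 < n)%N -> (0 < l1)%N -> (0 < l2)%N -> (0 < d)%N ->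
  (forall t, 0 <= t <= T -> psdmx (Q t)) ->
  (forall t, 0 <= t <= T -> pdmx (R1 t)) ->
  (forall t, 0 <= t <= T -> pdmx (R2 t)) ->
  forall t, 0 <= t <= T ->
  forall S : 'M[R]_n, psdmx S ->
  psdmx (Qtilde (Q t) (stackmx (C t)) (R1 t) (R2 t)
                (stackmx (D1 t)) (stackmx (D2 t)) S).
Proof.
move=> _ _ _ _ _ Q_psd R1_pd R2_pd t t_in S S_psd.
rewrite Qtilde_schurmx; apply: psdmxD; first exact: Q_psd.
have U_psd : psdmx (Umx (R2 t) (stackmx (D2 t)) S).
  exact/psdmx_schurmx/R2_pd/t_in/psdmx_hatmx.
exact/psdmx_congruence/psdmx_schurmx/R1_pd.
Qed.
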